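(* Let $n>(p+s)^4$ be an integer. Then $\rho_1 := \sum_{k=1}^{n} r_{1,k}=0$.
   Context: Let $p\geqslant 5$ be a prime and $s$ a positive integer. Write $v_p$ for the $p$-adic valuation and $(\alpha)_k=\alpha(\alpha+1)\cdots(\alpha+k-1)$. Put $N_0=v_p(p-1+s)$ and $M_0=p^{2+N_0}s-1$. For an integer $n>(p+s)^4$ let \[R_n(t)=p^{pn}\, n!^s\, t^{M_0}\,\frac{\prod_{j=1}^{p-1}(t+\frac{j}{p})_n}{(t)_{n+1}^{p-1+s}}\in\mathbb{Q}(t),\] with partial fraction decomposition $R_n(t)=\sum_{i=1}^{p-1+s}\sum_{k=1}^{n} r_{i,k}(t+k)^{-i}$, $r_{i,k}\in\mathbb{Q}$. *)

From mathcomp Require Import all_boot all_order all_algebra.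
Set Implicit Arguments. Unset Strict Implicit. Unset Printing Implicit Defensive.
Import Order.TTheory GRing.Theory Num.Theory.
Local Open Scope ring_scope.

Definition poch (a : rat) (k : nat) : rat := \prod_(i < k) (a + i%:R).

Definition N0 (p s : nat) : nat := logn p (p - 1 + s).

Definition M0 (p s : nat) : nat := (p ^ (2 + N0 p s) * s - 1)%N.

Definition Rn (p s n : nat) (t : rat) : rat :=
  (p ^ (p * n))%:R * (n`!)%:R ^+ s * t ^+ M0 p s
  * (\prod_(1 <= j < p) poch (t + j%:R / p%:R) n)
  / (poch t n.+1) ^+ (p - 1 + s).

From mathcomp Require Import all_boot all_order all_algebra.
From mathcomp Require Import ring lra zify.
Set Implicit Arguments. Unset Strict Implicit. Unset Printing Implicit Defensive.
Import Order.TTheory GRing.Theory Num.Theory.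
Local Open Scope ring_scope.

(* For t >= 1 the degree count M0 + (p-1) n + 2 <= (n+1)(p-1+s) bounds
   t^2 R_n(t) by a constant.  On the other hand, in the partial fraction
   expansion only the simple poles contribute to t^2 R_n(t) a term of order t,
   namely t * rho_1, so t |rho_1| is bounded for all t >= 1 and rho_1 = 0. *)

Section PartialFractions.
Variable R : realFieldType.
Implicit Types (t a k x B C : R).

Lemma eq0_of_linear_bound x B : (forall t, 1 <= t -> t * `|x| <= B) -> x = 0.
Proof.
move=> hB; case: (eqVneq x 0) => // x0.
have nx : 0 < `|x| by rewrite normr_gt0.
have B0 : 0 <= B by apply: le_trans (hB 1 (lexx _)); rewrite mul1r.
have := hB (B / `|x| + 1); rewrite lerDr divr_ge0 // => /(_ isT).
by rewrite mulrDl divfK ?gt_eqF // mul1r; lra.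
Qed.

Lemma simple_pole_defect t a k : 0 < t -> 0 <= k ->
  `|t ^+ 2 * (a / (t + k)) - t * a| <= `|a| * k.
Proof.
move=> t0 k0; have tk : 0 < t + k by rewrite ltr_wpDr.
have -> : t ^+ 2 * (a / (t + k)) - t * a = - (a * k) * (t / (t + k)).
  by field; rewrite gt_eqF.
rewrite normrM normrN normrM [`|k|]ger0_norm // ler_piMr ?mulr_ge0 //.
rewrite ger0_norm; last by rewrite divr_ge0 // ltW.
by rewrite ler_pdivrMr // mul1r lerDl.
Qed.

Lemma higher_pole_le t a k (i : nat) : 1 <= t -> 0 <= k -> (2 <= i)%N ->
  `|t ^+ 2 * (a / (t + k) ^+ i)| <= `|a|.
Proof.
move=> t1 k0 i2; have t0 : 0 < t := lt_le_trans ltr01 t1.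
have tk1 : 1 <= t + k by rewrite (le_trans t1) // lerDl.
have tk : 0 < t + k := lt_le_trans ltr01 tk1.
rewrite mulrCA normrM ler_piMr //.
rewrite ger0_norm; last by rewrite divr_ge0 // exprn_ge0 // ltW.
rewrite ler_pdivrMr ?exprn_gt0 // mul1r.
apply: le_trans (ler_weXn2l tk1 i2).
by apply: lerXn2r; rewrite ?nnegrE ?lerDl // ltW.
Qed.

Lemma partial_fraction_defect_bounded (m n : nat) (r : nat -> nat -> R) :
  (0 < m)%N -> exists K, forall t, 1 <= t ->
    `|t ^+ 2 * (\sum_(1 <= i < m.+1) \sum_(1 <= k < n.+1) r i k / (t + k%:R) ^+ i)
      - t * \sum_(1 <= k < n.+1) r 1%N k| <= K.
Proof.
move=> m0.
exists (\sum_(1 <= k < n.+1) `|r 1%N k| * k%:R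
        + \sum_(2 <= i < m.+1) \sum_(1 <= k < n.+1) `|r i k|) => t t1.
have t0 : 0 < t := lt_le_trans ltr01 t1.
rewrite (@big_ltn _ _ _ 1 m.+1) // mulrDr addrAC !mulr_sumr -sumrB.
apply: le_trans (ler_normD _ _) _; apply: lerD.
  apply: le_trans (ler_norm_sum _ _ _) _; apply: ler_sum => k _.
  by rewrite expr1; exact: simple_pole_defect.
apply: le_trans (ler_norm_sum _ _ _) _; rewrite !big_nat; apply: ler_sum => i /andP[i2 _].
rewrite mulr_sumr; apply: le_trans (ler_norm_sum _ _ _) _; apply: ler_sum => k _.
exact: higher_pole_le.
Qed.

Lemma residue_sum_eq0_of_decay (m n : nat) (r : nat -> nat -> R) (f : R -> R) C :
  (0 < m)%N ->
  (forall t, 1 <= t ->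
     f t = \sum_(1 <= i < m.+1) \sum_(1 <= k < n.+1) r i k / (t + k%:R) ^+ i) ->
  (forall t, 1 <= t -> `|t ^+ 2 * f t| <= C) ->
  \sum_(1 <= k < n.+1) r 1%N k = 0.
Proof.
move=> m0 hf hC; have [K hK] := partial_fraction_defect_bounded n r m0.
set rho := \sum_(1 <= k < n.+1) r 1%N k in hK *.
apply: (@eq0_of_linear_bound _ (C + K)) => t t1.
have t0 : 0 < t := lt_le_trans ltr01 t1.
have -> : t * `|rho| = `|t ^+ 2 * f t - (t ^+ 2 * f t - t * rho)|.
  by rewrite opprB addrC subrK normrM ger0_norm // ltW.
apply: le_trans (ler_normB _ _) _; apply: lerD; first exact: hC.
by rewrite hf //; exact: hK.
Qed.

End PartialFractions.

Lemma poch_ge0 (a : rat) (k : nat) : 0 <= a -> 0 <= poch a k.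
Proof. by move=> a0; apply: prodr_ge0 => i _; rewrite addr_ge0. Qed.

Lemma pochS (t : rat) (n : nat) : poch t n.+1 = t * poch (t + 1) n.
Proof.
rewrite /poch big_ord_recl /= addr0; congr (_ * _); apply: eq_bigr => i _.
by rewrite /bump /= add1n -addn1 natrD; ring.
Qed.

Lemma ler_poch (a b : rat) (n : nat) : 0 <= a -> a <= b -> poch a n <= poch b n.
Proof. by move=> a0 ab; apply: ler_prod => i _; rewrite addr_ge0 //= lerD2r. Qed.

Lemma exprn_le_poch (t : rat) (n : nat) : 0 <= t -> t ^+ n <= poch (t + 1) n.
Proof.
move=> t0; rewrite -[n in t ^+ n]card_ord -prodr_const; apply: ler_prod => i _.
by rewrite t0 -addrA lerDl addr_ge0.
Qed.

Lemma prod_poch_le (p n : nat) (t : rat) : 0 <= t ->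
  \prod_(1 <= j < p) poch (t + j%:R / p%:R) n <= poch (t + 1) n ^+ (p - 1).
Proof.
move=> t0; rewrite -prodr_const_nat !big_seq.
apply: ler_prod => j; rewrite mem_index_iota => /andP[_ jp].
have tj : 0 <= t + j%:R / p%:R by rewrite addr_ge0 ?divr_ge0.
rewrite poch_ge0 //= ler_poch // lerD2l ler_pdivrMr ?ltr0n ?(leq_ltn_trans _ jp) //.
by rewrite mul1r ler_nat ltnW.
Qed.

Lemma M0_add2_le (p s n : nat) : (0 < s)%N -> (p ^ 2 * (p - 1 + s) < n)%N ->
  (M0 p s + 2 <= p - 1 + s + s * n)%N.
Proof.
move=> s0 hn.
have hN0 : (p ^ N0 p s <= p - 1 + s)%N.
  by apply: dvdn_leq; [lia | exact: pfactor_dvdnn].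
have hq : (p ^ 2 * p ^ N0 p s < n)%N.
  by apply: leq_ltn_trans hn; rewrite leq_mul2l hN0 orbT.
rewrite /M0 expnD; nia.
Qed.

Lemma Rn_decay (p s n : nat) (t : rat) :
  (M0 p s + 2 <= p - 1 + s + s * n)%N -> 1 <= t ->
  `|t ^+ 2 * Rn p s n t| <= (p ^ (p * n))%:R * (n`!)%:R ^+ s.
Proof.
move=> hdeg t1; have t0 : 0 < t := lt_le_trans ltr01 t1.
set C := (p ^ (p * n))%:R * (n`!)%:R ^+ s : rat.
set P := \prod_(1 <= j < p) poch (t + j%:R / p%:R) n.
set Q := poch (t + 1) n.
have C0 : 0 <= C by rewrite mulr_ge0 ?exprn_ge0.
have tQ : t ^+ n <= Q by exact: exprn_le_poch (ltW t0).
have Q0 : 0 < Q := lt_le_trans (exprn_gt0 n t0) tQ.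
have P0 : 0 <= P.
  by apply: prodr_ge0 => j _; apply: poch_ge0; rewrite addr_ge0 ?divr_ge0 // ltW.
have PQ : P <= Q ^+ (p - 1) by exact: prod_poch_le (ltW t0).
have -> : t ^+ 2 * Rn p s n t = C * t ^+ (M0 p s + 2) * P / (t * Q) ^+ (p - 1 + s).
  by rewrite /Rn pochS -/P -/C -/Q [t ^+ (_ + 2)]exprD; ring.
have D0 : 0 < (t * Q) ^+ (p - 1 + s) by rewrite exprn_gt0 // mulr_gt0.
rewrite ger0_norm; last by rewrite divr_ge0 ?(ltW D0) // !mulr_ge0 // exprn_ge0 // ltW.
rewrite ler_pdivrMr //.
have -> : C * (t * Q) ^+ (p - 1 + s) = C * (t ^+ (p - 1 + s) * Q ^+ s) * Q ^+ (p - 1).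
  by rewrite exprMn [Q ^+ (_ + _)]exprD; ring.
have tM : t ^+ (M0 p s + 2) <= t ^+ (p - 1 + s) * Q ^+ s.
  apply: le_trans (ler_weXn2l t1 hdeg) _.
  rewrite exprD ler_wpM2l ?exprn_ge0 ?(ltW t0) // mulnC exprM.
  by apply: lerXn2r; rewrite ?nnegrE ?exprn_ge0 // ltW.
apply: ler_pM => //; first by rewrite mulr_ge0 // exprn_ge0 // ltW.
by rewrite ler_wpM2l.
Qed.

Theorem lemma4p1 (p s n : nat) (r : nat -> nat -> rat) :
  prime p -> (5 <= p)%N -> (0 < s)%N -> ((p + s) ^ 4 < n)%N ->
  (forall t : rat, (forall k : nat, (k <= n)%N -> t + k%:R != 0) ->
     Rn p s n t =
     \sum_(1 <= i < (p - 1 + s).+1) \sum_(1 <= k < n.+1) r i k / (t + k%:R) ^+ i) ->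
  \sum_(1 <= k < n.+1) r 1%N k = 0.
Proof.
move=> _ _ s0 hn hR.
have hdeg : (M0 p s + 2 <= p - 1 + s + s * n)%N.
  apply: M0_add2_le => //; apply: leq_ltn_trans hn.
  have -> : ((p + s) ^ 4 = (p + s) ^ 2 * (p + s) ^ 2)%N by rewrite -expnD.
  apply: leq_mul; first by rewrite leq_exp2r // leq_addr.
  by rewrite expnS expn1; nia.
apply: (residue_sum_eq0_of_decay (m := (p - 1 + s)%N) (f := Rn p s n)); first by lia.
- move=> t t1; apply: hR => k _.
  by rewrite gt_eqF // ltr_wpDr // (lt_le_trans ltr01 t1).
- by move=> t; exact: Rn_decay.
Qed.
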